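(* Let $n\ge3$ and $\lambda\ge1$ be integers and let $A,X,Y,a,x,y,z,H,J$ be as below. Then $(x,y,z)$ is a flag-regular triple for $A$, and $\mathbf Q_n^{(\lambda)}\cong\mathrm{Cos}(A,H,J)\cong\mathrm{Cos}(X,\langle a\rangle,\langle z\rangle)\cong\mathrm{Cos}(Y,\langle a\rangle,\langle zx\rangle)$, a graph of valency $n$ and edge-multiplicity $\lambda$.
   Context: $A=N\rtimes(\langle a\rangle\rtimes\langle x\rangle)$, where $N=\langle v_0,\dots,v_{n-1}\rangle\cong\mathbb Z_2^n$ is elementary abelian with basis $v_0,\dots,v_{n-1}$, $|a|=n\lambda$, $|x|=2$, $a^x=a^{-1}$, $v_i^a=v_{i+1}$ and $v_i^x=v_{n-i}$ (indices mod $n$). Let $z=v_0$, $y=ax$, $H=\langle x,y\rangle=\langle a\rangle\rtimes\langle x\rangle\cong D_{2n\lambda}$, $J=\langle x,z\rangle\cong\mathbb Z_2^2$, $X=N\rtimes\langle a\rangle=\langle a,z\rangle$, and $Y=(\langle v_0v_1,\dots,v_{n-2}v_{n-1}\rangle\rtimes\langle a\rangle)\rtimes\langle zx\rangle=\langle a,zx\rangle$. A flag-regular triple for a group $G$ is $(x,y,z)$, pairwise distinct involutions with $G=\langle x,y,z\rangle$, $xz=zx$, $z\notin\langle x,y\rangle$, $|xy|,|yz|$ finite. $\mathrm{Cos}(G,H,J)$: vertices the right cosets of $H$, edges the right cosets of $J$, $Hu$ incident with $Jv$ iff $vu^{-1}\in JH$. $\mathbf Q_n$ is the $n$-dimensional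 hypercube (vertices $\mathbb Z_2^n$, adjacent iff differing in exactly one coordinate) and $\mathbf Q_n^{(\lambda)}$ is obtained by replacing each edge by $\lambda$ parallel edges. *)

From mathcomp Require Import all_boot all_fingroup all_solvable.
Set Implicit Arguments. Unset Strict Implicit. Unset Printing Implicit Defensive.

Local Open Scope group_scope.

Definition mgraph_iso (V1 E1 V2 E2 : finType)
    (vs1 : {set V1}) (es1 : {set E1}) (I1 : V1 -> E1 -> bool)
    (vs2 : {set V2}) (es2 : {set E2}) (I2 : V2 -> E2 -> bool) : Prop :=
  exists (f : V1 -> V2) (g : E1 -> E2),
    [/\ {in vs1 &, injective f}, f @: vs1 = vs2,
        {in es1 &, injective g}, g @: es1 = es2 &
        {in vs1, forall u, {in es1, forall e, I2 (f u) (g e) = I1 u e}}].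

Definition madj (V E : finType) (es : {set E}) (I : V -> E -> bool) (u w : V) :=
  (u != w) && [exists e in es, I u e && I w e].

Definition val_mult (V E : finType) (vs : {set V}) (es : {set E})
    (I : V -> E -> bool) (k m : nat) : Prop :=
  [/\ {in es, forall e, #|[set u in vs | I u e]| = 2},
      {in vs, forall u, #|[set w in vs | madj es I u w]| = k} &
      {in vs &, forall u w, madj es I u w ->
                 #|[set e in es | I u e && I w e]| = m}].

(* vertices: right cosets H u; edges: right cosets J v;
   H u incident with J v iff v u^-1 \in J H (u, v chosen representatives). *)
Definition cos_inc (gT : finGroupType) (H J : {set gT}) (B C : {set gT}) : bool :=
  repr C * (repr B)^-1 \in J * H.

Definition cos_iso (gT1 gT2 : finGroupType)
    (G1 H1 J1 : {set gT1}) (G2 H2 J2 : {set gT2}) : Prop :=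
  mgraph_iso (rcosets H1 G1) (rcosets J1 G1) (@cos_inc gT1 H1 J1)
             (rcosets H2 G2) (rcosets J2 G2) (@cos_inc gT2 H2 J2).

Notation cube_vert n := {ffun 'I_n -> bool}.

Definition cube_adj (n : nat) (u w : cube_vert n) : bool :=
  #|[set i | u i != w i]| == 1%N.

Definition cube_edges0 (n : nat) : {set {set cube_vert n}} :=
  [set e | [exists u : cube_vert n, exists w : cube_vert n,
              cube_adj u w && (e == [set u; w])]].

(* each edge of Q_n replaced by lam parallel copies *)
Definition cube_edges (n lam : nat) : {set {set cube_vert n} * 'I_lam} :=
  setX (cube_edges0 n) [set: 'I_lam].

Definition cube_inc (n lam : nat) (u : cube_vert n)
    (e : {set cube_vert n} * 'I_lam) : bool := u \in e.1.

Definition cube_cos_iso (n lam : nat) (gT : finGroupType) (G H J : {set gT}) : Prop :=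
  mgraph_iso [set: cube_vert n] (cube_edges n lam) (@cube_inc n lam)
             (rcosets H G) (rcosets J G) (@cos_inc gT H J).

Definition flag_regular (gT : finGroupType) (G : {set gT}) (x y z : gT) : Prop :=
  [/\ [/\ #[x] = 2, #[y] = 2 & #[z] = 2]%N,
      [/\ x != y, y != z & x != z],
      G = <<[set x; y; z]>>,
      commute x z &
      z \notin <<[set x; y]>>].
(* |xy|, |yz| finite: automatic in a finite group. *)

Definition Nsub (gT : finGroupType) (n : nat) (v : nat -> gT) : {set gT} :=
  <<[set v (val i) | i : 'I_n]>>.

From mathcomp Require Import all_boot all_fingroup all_solvable zify.
Set Implicit Arguments. Unset Strict Implicit. Unset Printing Implicit Defensive.
Local Open Scope group_scope.

(* Since H = <x, ax> = D and A = N D, the right cosets of H correspond to the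
   elements of N = Z_2^n, i.e. to the vertices of Q_n.  The subgroup X = N <a>
   satisfies X :&: H = <a>, X :&: J = <z>, A = H X = J X and
   X :&: J H = (X :&: J)(X :&: H), which makes Cos(X, <a>, <z>) isomorphic to
   Cos(A, H, J).  In Cos(X, <a>, <z>) the vertex <a> p (p in N) lies on the edge
   <z> a^m q iff q = p or q = v_(m mod n) p, so writing p = prod_(u_i) v_i the
   edge <z> a^(i + n k) p joins u and u + e_i, and k < lam numbers the lam
   parallel copies.  The subgroup Y = <a, zx> plays the same role with zx in place
   of z; the key point Y :&: D = <a> holds because every element p d of Y
   (p in N, d in D) has d a reflection exactly when p has odd weight. *)

Lemma in_inj_inverse (T1 T2 : finType) (x0 : T1) (f : T1 -> T2)
    (A : {set T1}) (B : {set T2}) :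
  {in A &, injective f} -> f @: A = B ->
  exists g : T2 -> T1, {in B, forall y, g y \in A /\ f (g y) = y} /\ {in A, cancel f g}.
Proof.
move=> injf fA; exists (fun y => odflt x0 [pick u in A | f u == y]).
have gK y : y \in B -> odflt x0 [pick u in A | f u == y] \in A /\
                     f (odflt x0 [pick u in A | f u == y]) = y.
  rewrite -fA => /imsetP [u Au ->].
  by case: pickP => [u' /andP [Au' /eqP] | /(_ u)] //; rewrite Au eqxx.
split=> // u Au; have [] := gK (f u); first by rewrite -fA imset_f.
by move=> ? ?; apply: injf.
Qed.

Lemma card_transport (T1 T2 : finType) (f : T1 -> T2) (A : {set T1}) (B : {set T2})
    (P1 : pred T1) (P2 : pred T2) :
  {in A &, injective f} -> f @: A = B -> {in A, forall u, P2 (f u) = P1 u} ->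
  #|[set w in B | P2 w]| = #|[set u in A | P1 u]|.
Proof.
move=> finj fA fP.
have -> : [set w in B | P2 w] = f @: [set u in A | P1 u].
  apply/setP => w; apply/idP/imsetP => [|[u]].
    rewrite inE -fA => /andP [/imsetP [u Au ->]]; rewrite fP // => P1u.
    by exists u; rewrite // inE Au.
  by rewrite inE => /andP [Au P1u] ->; rewrite inE -fA imset_f ?fP.
by rewrite card_in_imset // => u w; rewrite !inE => /andP [Au _] /andP [Aw _]; apply: finj.
Qed.

Section MultigraphIso.
Variables (V1 E1 V2 E2 : finType).
Variables (vs1 : {set V1}) (es1 : {set E1}) (I1 : V1 -> E1 -> bool).
Variables (vs2 : {set V2}) (es2 : {set E2}) (I2 : V2 -> E2 -> bool).

Lemma mgraph_iso_sym (v0 : V1) (e0 : E1) :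
  mgraph_iso vs1 es1 I1 vs2 es2 I2 -> mgraph_iso vs2 es2 I2 vs1 es1 I1.
Proof.
case=> f [g [finj fim ginj gim inc]].
have [f' [f'K fK]] := in_inj_inverse v0 finj fim.
have [g' [g'K gK]] := in_inj_inverse e0 ginj gim.
have inv_onto (T1 T2 : finType) (h : T1 -> T2) h' (S : {set T1}) S' :
    h @: S = S' -> {in S', forall y, h' y \in S /\ h (h' y) = y} ->
    {in S, cancel h h'} -> {in S' &, injective h'} /\ h' @: S' = S.
  move=> hS h'K hK; split=> [y y' /h'K [_ hy] /h'K [_ hy'] eq | ].
    by rewrite -hy -hy' eq.
  apply/setP => u; apply/imsetP/idP => [[y /h'K [] ? _ -> //] | Su].
  by exists (h u); [rewrite -hS imset_f | rewrite hK].
have [f'inj f'im] := inv_onto _ _ _ _ _ _ fim f'K fK.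
have [g'inj g'im] := inv_onto _ _ _ _ _ _ gim g'K gK.
exists f', g'; split=> // y /f'K [f'y ff'y] e /g'K [g'e gg'e].
by rewrite -inc // ff'y gg'e.
Qed.

Lemma val_mult_iso k m :
  mgraph_iso vs1 es1 I1 vs2 es2 I2 -> val_mult vs1 es1 I1 k m -> val_mult vs2 es2 I2 k m.
Proof.
case=> f [g [finj fim ginj gim inc]] [ends valency mult].
have madjE u w : u \in vs1 -> w \in vs1 -> madj es2 I2 (f u) (f w) = madj es1 I1 u w.
  move=> u1 w1; rewrite /madj (inj_in_eq finj) //; congr (_ && _).
  rewrite -gim; apply/exists_inP/exists_inP => [[_ /imsetP [e e1 ->]] | [e e1]].
    by exists e; rewrite // -!inc.
  by exists (g e); rewrite ?imset_f // !inc.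
split.
- rewrite -gim => _ /imsetP [e e1 ->].
  by rewrite -(ends _ e1); apply: (card_transport finj fim) => u u1; rewrite inc.
- rewrite -fim => _ /imsetP [u u1 ->].
  by rewrite -(valency _ u1); apply: (card_transport finj) => // w w1; rewrite madjE.
rewrite -fim => _ _ /imsetP [u u1 ->] /imsetP [w w1 ->].
rewrite madjE // => uw; rewrite -(mult _ _ u1 w1 uw).
by apply: (card_transport ginj gim) => e e1; rewrite !inc.
Qed.

End MultigraphIso.

Lemma mgraph_iso_trans (V1 E1 V2 E2 V3 E3 : finType)
    (vs1 : {set V1}) (es1 : {set E1}) (I1 : V1 -> E1 -> bool)
    (vs2 : {set V2}) (es2 : {set E2}) (I2 : V2 -> E2 -> bool)
    (vs3 : {set V3}) (es3 : {set E3}) (I3 : V3 -> E3 -> bool) :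
  mgraph_iso vs1 es1 I1 vs2 es2 I2 -> mgraph_iso vs2 es2 I2 vs3 es3 I3 ->
  mgraph_iso vs1 es1 I1 vs3 es3 I3.
Proof.
case=> f1 [g1 [finj1 fim1 ginj1 gim1 inc1]]; case=> f2 [g2 [finj2 fim2 ginj2 gim2 inc2]].
have f1in u : u \in vs1 -> f1 u \in vs2 by rewrite -fim1; apply: imset_f.
have g1in e : e \in es1 -> g1 e \in es2 by rewrite -gim1; apply: imset_f.
exists (f2 \o f1), (g2 \o g1); split.
- by move=> u w u1 w1 /= /finj2 eq; apply: finj1 => //; apply: eq; apply: f1in.
- by rewrite imset_comp fim1.
- by move=> d e d1 e1 /= /ginj2 eq; apply: ginj1 => //; apply: eq; apply: g1in.
- by rewrite imset_comp gim1.
by move=> u u1 e e1 /=; rewrite inc2 ?inc1 ?f1in ?g1in.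
Qed.

Section GroupFacts.
Variable gT : finGroupType.
Implicit Types (B S : {set gT}) (G H J K M : {group gT}).

Lemma gen_subset_mulr_closed B S :
  1 \in S -> (forall g b, g \in S -> b \in B -> g * b \in S) -> <<B>> \subset S.
Proof.
move=> S1 SB; pose T := [set t | [forall g in S, g * t \in S]].
have T_group : group_set T.
  apply/group_setP; split=> [|t1 t2]; rewrite !inE.
    by apply/forall_inP => g Sg; rewrite mulg1.
  move=> /forall_inP St1 /forall_inP St2; apply/forall_inP => g Sg.
  by rewrite mulgA St2 ?St1.
have /subsetP sBT : <<B>> \subset Group T_group.
  by rewrite gen_subG; apply/subsetP => b Bb; rewrite inE; apply/forall_inP => g /SB ->.
by apply/subsetP => t /sBT; rewrite inE => /forall_inP /(_ 1 S1); rewrite mul1g.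
Qed.

Lemma mem_gen_set21 (g h : gT) : g \in <<[set g; h]>>.
Proof. by rewrite mem_gen ?set21. Qed.

Lemma mem_gen_set22 (g h : gT) : h \in <<[set g; h]>>.
Proof. by rewrite mem_gen ?set22. Qed.

Lemma gen_set2_mulg (c y : gT) : commute c y -> <<[set y; c]>> = <[c]> * <[y]>.
Proof.
move=> cy; rewrite -comm_joingE 1?joingC; last exact/centC/cents_cycle.
by rewrite /cycle joing_idl joing_idr joingE.
Qed.

Lemma mem_mul_double_coset H J (j g h : gT) :
  j \in J -> h \in H -> (j * g * h \in J * H) = (g \in J * H).
Proof.
have closed j' g' h' : j' \in J -> h' \in H -> g' \in J * H -> j' * g' * h' \in J * H.
  move=> jJ hH /mulsgP [j'' h'' j''J h''H ->].
  by rewrite !mulgA -(mulgA _ h'') mem_mulg ?groupM.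
move=> jJ hH; apply/idP/idP; last exact: closed.
move/(closed j^-1 _ h^-1); rewrite !groupV => /(_ jJ hH).
by rewrite !mulgA mulVg mul1g mulgK.
Qed.

Lemma setI_mulg_sub K H J M :
  J \subset M * H -> M \subset K :&: J -> K :&: (J * H) \subset (K :&: J) * (K :&: H).
Proof.
move=> sJMH sMKJ; have /subsetIP [sMK _] := sMKJ.
have sJH : J * H \subset M * H by rewrite -{2}(mulGid H) mulgA mulSg.
apply: subset_trans (setIS K sJH) _.
by rewrite setIC -group_modl // setIC mulgSS.
Qed.

Lemma prodg_mul_at (I : eqType) (r : seq I) (j : I) (g : gT)
    (F F' : I -> gT) :
  (forall i, commute g (F i)) -> (forall i, i != j -> F' i = F i) -> F' j = g * F j ->
  \prod_(i <- r) F' i = g ^+ count_mem j r * \prod_(i <- r) F i.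
Proof.
move=> cgF F'E F'j; elim: r => [|i r IHr]; first by rewrite !big_nil mulg1.
rewrite !big_cons IHr /=; case: (eqVneq i j) => [-> | ij].
  rewrite F'j add1n expgS -!mulgA; congr (_ * _); rewrite !mulgA; congr (_ * _).
  exact: commuteX (commute_sym (cgF j)).
rewrite F'E // add0n !mulgA; congr (_ * _).
exact: commuteX (commute_sym (cgF i)).
Qed.

End GroupFacts.

Section CosetGraphs.
Variable gT : finGroupType.
Implicit Types G H J K M : {group gT}.

Lemma cos_incE H J (u w : gT) :
  cos_inc H J (H :* u) (J :* w) = (w * u^-1 \in J * H).
Proof.
rewrite /cos_inc.
have /rcosetP [h hH ->] := mem_repr_rcoset H u.
have /rcosetP [j jJ ->] := mem_repr_rcoset J w.
by rewrite invMg !mulgA -(mulgA j) mem_mul_double_coset ?groupV.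
Qed.


Lemma rcoset_repr_subgroup K M (k : gT) : M :* repr ((K :&: M) :* k) = M :* k.
Proof.
apply/rcoset_eqP; have := mem_repr_rcoset (K :&: M) k.
by apply/subsetP; rewrite rcosetS subsetIr.
Qed.


Lemma rcosets_subgroup_bij G K M :
  K \subset G -> G \subset M * K ->
  {in rcosets (K :&: M) K &, injective (fun C => M :* repr C)} /\
  [set M :* repr C | C in rcosets (K :&: M) K] = rcosets M G.
Proof.
move=> sKG sGMK; split.
  move=> _ _ /rcosetsP [k1 k1K ->] /rcosetsP [k2 k2K ->].
  rewrite !rcoset_repr_subgroup => /rcoset_eqP; rewrite !mem_rcoset => Mk12.
  by apply/rcoset_eqP; rewrite mem_rcoset inE Mk12 groupM ?groupV.
apply/setP => C; apply/imsetP/rcosetsP => [[_ /rcosetsP [k kK ->] ->] | [g gG ->]].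
  by exists k; rewrite ?rcoset_repr_subgroup ?(subsetP sKG).
have /mulsgP [m k mM kK ->] := subsetP sGMK _ gG.
exists ((K :&: M) :* k); first by apply/rcosetsP; exists k.
by rewrite rcoset_repr_subgroup; apply/rcoset_eqP; rewrite mem_rcoset mulgK.
Qed.


Lemma cos_iso_subgroup G K H J :
  K \subset G -> G \subset H * K -> G \subset J * K ->
  K :&: (J * H) \subset (K :&: J) * (K :&: H) ->
  cos_iso K (K :&: H) (K :&: J) G H J.
Proof.
move=> sKG sGHK sGJK sKJH.
have [finj fim] := rcosets_subgroup_bij sKG sGHK.
have [ginj gim] := rcosets_subgroup_bij sKG sGJK.
exists (fun C => H :* repr C), (fun C => J :* repr C); split=> //.
move=> _ /rcosetsP [k1 k1K ->] _ /rcosetsP [k2 k2K ->].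
rewrite !rcoset_repr_subgroup !cos_incE; apply/idP/idP => [k21JH|].
  by move: sKJH => /subsetP; apply; rewrite inE k21JH groupM ?groupV.
by apply/subsetP; apply: mulgSS; apply: subsetIr.
Qed.


End CosetGraphs.

Lemma set2_mem_eq (T : finType) (u w p q : T) :
  u != w -> u \in [set p; q] -> w \in [set p; q] -> [set p; q] = [set u; w].
Proof.
move=> uw; rewrite !inE => /orP [] /eqP eu /orP [] /eqP ew; subst; rewrite ?eqxx // in uw.
exact: setUC.
Qed.

Section Hypercube.
Variables (n lam : nat).
Hypothesis lam_gt0 : (0 < lam)%N.

Definition cube_flip (i : 'I_n) (u : cube_vert n) : cube_vert n :=
  [ffun j => if j == i then ~~ u j else u j].

Definition flip_index (u w : cube_vert n) : nat :=
  odflt 0%N (omap val [pick i : 'I_n | u i != w i]).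

Lemma cube_flipK i : involutive (cube_flip i).
Proof. by move=> u; apply/ffunP => j; rewrite !ffunE; case: eqP; rewrite ?negbK. Qed.

Lemma cube_flip_neq i u : cube_flip i u != u.
Proof. by apply/eqP => /ffunP /(_ i); rewrite ffunE eqxx; case: (u i). Qed.

Lemma cube_flip_inj u : injective (cube_flip^~ u).
Proof.
move=> i j /ffunP /(_ i); rewrite !ffunE eqxx.
by case: (i =P j) => // _; case: (u i).
Qed.

Lemma cube_adj_flip u i : cube_adj u (cube_flip i u).
Proof.
apply/cards1P; exists i; apply/setP => j; rewrite !inE ffunE.
by case: (j =P i) => [-> | _]; [case: (u i) | rewrite eqxx].
Qed.

Lemma cube_adjP u w : cube_adj u w -> exists i, w = cube_flip i u /\ flip_index u w = i.
Proof.
move=> /cards1P [i0 /setP diff_i0].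
have diffE j : (u j != w j) = (j == i0) by have := diff_i0 j; rewrite !inE.
exists i0; split.
  apply/ffunP => j; rewrite ffunE; case: (j =P i0) => [-> | /eqP ne].
    by have := diffE i0; rewrite eqxx; case: (u i0); case: (w i0).
  by have := diffE j; rewrite (negbTE ne) => /negbFE /eqP.
rewrite /flip_index; case: pickP => [j /= | /(_ i0) /=]; last by rewrite diffE eqxx.
by rewrite diffE => /eqP ->.
Qed.

Lemma cube_edgeP e : e \in cube_edges n lam -> exists u i, e.1 = [set u; cube_flip i u].
Proof.
case: e => S k; rewrite in_setX => /andP [/= + _].
rewrite inE => /existsP [u /existsP [w /andP [/cube_adjP [i [-> _]] /eqP ->]]].
by exists u, i.
Qed.

Lemma cube_edge_in u i (k : 'I_lam) : ([set u; cube_flip i u], k) \in cube_edges n lam.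
Proof.
rewrite in_setX in_setT andbT inE; apply/existsP; exists u.
by apply/existsP; exists (cube_flip i u); rewrite cube_adj_flip eqxx.
Qed.

Lemma madj_cube u w :
  madj (cube_edges n lam) (@cube_inc n lam) u w = [exists i, w == cube_flip i u].
Proof.
apply/idP/existsP => [/andP [uw /exists_inP [e eE /andP [ue we]]] | [i /eqP ->]].
  have [u' [i e1]] := cube_edgeP eE; rewrite /cube_inc e1 !inE in ue we.
  case/orP: ue => /eqP eu; case/orP: we => /eqP ew; subst.
  - by rewrite eqxx in uw.
  - by exists i.
  - by exists i; rewrite cube_flipK.
  - by rewrite eqxx in uw.
rewrite /madj eq_sym cube_flip_neq; apply/exists_inP.
exists ([set u; cube_flip i u], Ordinal lam_gt0); first exact: cube_edge_in.
by rewrite /cube_inc !inE !eqxx orbT.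
Qed.

Lemma cube_val_mult :
  val_mult [set: cube_vert n] (cube_edges n lam) (@cube_inc n lam) n lam.
Proof.
split.
- move=> e /cube_edgeP [u [i e1]].
  have -> : [set w in [set: cube_vert n] | cube_inc w e] = e.1 by apply/setP => w; rewrite !inE.
  by rewrite e1 cards2 eq_sym cube_flip_neq.
- move=> u _.
  have -> : [set w in [set: cube_vert n] | madj (cube_edges n lam) (@cube_inc n lam) u w]
          = [set cube_flip i u | i : 'I_n].
    apply/setP => w; rewrite !inE madj_cube.
    by apply/existsP/imsetP => [[i /eqP ->] | [i _ ->]]; exists i.
  by rewrite card_imset ?card_ord //; apply: cube_flip_inj.
move=> u w _ _; rewrite madj_cube => /existsP [i /eqP def_w].
have -> : [set e in cube_edges n lam | cube_inc u e && cube_inc w e]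
        = [set ([set u; w], k) | k : 'I_lam].
  have uw : u != w by rewrite def_w eq_sym cube_flip_neq.
  apply/setP => -[S k]; rewrite inE /cube_inc /=; apply/andP/imsetP => [[] | [k' _ [-> ->]]].
    by case/cube_edgeP => u' [j /= ->] /andP [uS wS]; exists k; rewrite // (set2_mem_eq uw).
  by rewrite def_w cube_edge_in !inE !eqxx orbT.
by rewrite card_imset ?card_ord // => k k' [].
Qed.

End Hypercube.

Section CubeGroup.
Variables (gT : finGroupType) (n lam : nat) (v : nat -> gT) (a x : gT) (D A : {group gT}).
Local Notation N := <<[set v (val i) | i : 'I_n]>>.
Local Notation z := (v 0%N).
Local Notation H := <<[set x; a * x]>>.
Local Notation J := <<[set x; z]>>.
Local Notation X := <<[set a; z]>>.
Local Notation Y := <<[set a; z * x]>>.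

Hypotheses (n_ge3 : (3 <= n)%N) (abelN : 2.-abelem N) (cardN : #|N| = (2 ^ n)%N)
  (order_a : #[a] = (n * lam)%N) (order_x : #[x] = 2%N) (conj_ax : a ^ x = a^-1)
  (sdD : <[a]> ><| <[x]> = D) (sdA : N ><| D = A)
  (conj_va : forall i, (i < n)%N -> v i ^ a = v ((i + 1) %% n))
  (conj_vx : forall i, (i < n)%N -> v i ^ x = v ((n - i) %% n)).

Lemma n_gt0 : (0 < n)%N. Proof. exact: leq_trans n_ge3. Qed.

Lemma mulND : N * D = A. Proof. by case/sdprodP: sdA. Qed.
Lemma norm_DN : D \subset 'N(N). Proof. by case/sdprodP: sdA. Qed.
Lemma tiND : N :&: D = 1. Proof. by case/sdprodP: sdA. Qed.
Lemma mul_ax : <[a]> * <[x]> = D. Proof. by case/sdprodP: sdD. Qed.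
Lemma ti_ax : <[a]> :&: <[x]> = 1. Proof. by case/sdprodP: sdD. Qed.

Lemma a_in_D : a \in D. Proof. by rewrite -mul_ax (subsetP (mulG_subl _ _)) ?cycle_id. Qed.
Lemma x_in_D : x \in D. Proof. by rewrite -mul_ax (subsetP (mulG_subr _ _)) ?cycle_id. Qed.
Lemma D_sub_A : D \subset A. Proof. by rewrite -mulND mulG_subr. Qed.
Lemma N_sub_A : N \subset A. Proof. by rewrite -mulND mulG_subl. Qed.

Lemma v_in_N i : (i < n)%N -> v i \in N.
Proof. by move=> lt_in; apply: mem_gen; apply/imsetP; exists (Ordinal lt_in). Qed.

Lemma z_in_N : z \in N. Proof. exact/v_in_N/n_gt0. Qed.

Lemma expg2_N g : g \in N -> g ^+ 2 = 1.
Proof. by case/(abelemP (isT : prime 2)): abelN => _; apply. Qed.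

Lemma invg_N g : g \in N -> g^-1 = g.
Proof. by move=> gN; apply/eqP; rewrite eq_invg_mul -expg2 expg2_N. Qed.

Lemma commute_N g h : g \in N -> h \in N -> commute g h.
Proof. by move=> gN hN; apply: (centsP (abelem_abelian abelN)). Qed.

Lemma conj_z_expa m : z ^ (a ^+ m) = v (m %% n).
Proof.
elim: m => [|m IHm]; first by rewrite conjg1 mod0n.
by rewrite expgSr conjgM IHm conj_va ?ltn_pmod ?n_gt0 // modnDml addn1.
Qed.

Lemma conj_z_x : z ^ x = z.
Proof. by rewrite conj_vx ?n_gt0 // subn0 modnn. Qed.

Lemma D_cases d : d \in D -> d \in <[a]> \/ exists2 c, c \in <[a]> & d = c * x.
Proof.
rewrite -mul_ax => /mulsgP [c e ca]; rewrite (cycle2g order_x) !inE.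
by case/orP => /eqP -> ->; [left; rewrite mulg1 | right; exists c].
Qed.

Lemma conj_z_D d : d \in D -> exists m, z ^ d = v (m %% n).
Proof.
case/D_cases => [/cycleP [k ->] | [_ /cycleP [k ->] ->]]; first by exists k; rewrite conj_z_expa.
by exists (n - k %% n)%N; rewrite conjgM conj_z_expa conj_vx ?ltn_pmod ?n_gt0.
Qed.

Definition vprod (u : cube_vert n) : gT := \prod_(i < n) (if u i then v i else 1).

Lemma vprod_in_N u : vprod u \in N.
Proof. by apply: group_prod => i _; case: (u i); rewrite ?group1 ?v_in_N. Qed.

Lemma vprod_flip u i : vprod (cube_flip i u) = v i * vprod u.
Proof.
rewrite /vprod (@prodg_mul_at _ _ _ i (v i) (fun j => if u j then v j else 1)).
- by rewrite count_uniq_mem ?index_enum_uniq // mem_index_enum expg1.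
- by move=> j; apply: commute_N; case: (u j); rewrite ?group1 ?v_in_N.
- by move=> j ji; rewrite ffunE (negbTE ji).
rewrite ffunE eqxx; case: (u i) => /=; last by rewrite mulg1.
by rewrite -expg2 expg2_N ?v_in_N.
Qed.

Lemma vprod0 : vprod [ffun=> false] = 1.
Proof. by rewrite /vprod big1 // => i _; rewrite ffunE. Qed.

Lemma vprod_onto g : g \in N -> exists u, vprod u = g.
Proof.
have : N \subset [set vprod u | u : cube_vert n].
  apply: gen_subset_mulr_closed => [|_ _ /imsetP [u _ ->] /imsetP [i _ ->]].
    by apply/imsetP; exists [ffun=> false]; rewrite ?vprod0.
  apply/imsetP; exists (cube_flip i u) => //.
  by rewrite vprod_flip; exact: commute_N (vprod_in_N u) (v_in_N (ltn_ord i)).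
by move=> /subsetP sNP /sNP /imsetP [u _ ->]; exists u.
Qed.

(* [vprod] maps the [2 ^ n] vertices onto [N], which has [2 ^ n] elements. *)
Lemma vprod_inj : injective vprod.
Proof.
have vprodT : vprod @: [set: cube_vert n] = N.
  apply/setP => g; apply/imsetP/idP => [[u _ ->] | /vprod_onto [u <-]].
    exact: vprod_in_N.
  by exists u.
have : #|vprod @: [set: cube_vert n]| == #|[set: cube_vert n]|.
  by rewrite vprodT cardN cardsT card_ffun card_bool card_ord.
by move/imset_injP => inj u w; apply: inj; rewrite inE.
Qed.

Definition coords (g : gT) : cube_vert n := odflt [ffun=> false] [pick u | vprod u == g].

Lemma vprodK : cancel vprod coords.
Proof.
by move=> u; rewrite /coords; case: pickP => [w /eqP /vprod_inj | /(_ u)]; rewrite ?eqxx.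
Qed.

Definition parity (g : gT) : bool := odd (\sum_(i < n) coords g i).

Lemma parity1 : parity 1 = false.
Proof. by rewrite -vprod0 /parity vprodK big1 // => i _; rewrite ffunE. Qed.

Lemma parity_vmul g (i : 'I_n) : g \in N -> parity (v i * g) = ~~ parity g.
Proof.
case/vprod_onto => u <-; rewrite -vprod_flip /parity !vprodK.
rewrite (bigD1 i) // [in RHS](bigD1 i) //= ffunE eqxx !oddD.
rewrite (eq_bigr (fun j => u j : nat)) => [|j ji]; last by rewrite ffunE (negbTE ji).
by case: (u i); rewrite ?negbK.
Qed.

Lemma z_neq1 : z != 1.
Proof.
apply/eqP => z1; have := parity_vmul (Ordinal n_gt0) (group1 N).
by rewrite mulg1 /= z1 parity1.
Qed.

Lemma order_z : #[z] = 2%N. Proof. exact: abelem_order_p abelN z_in_N z_neq1. Qed.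

Lemma H_eq_D : H = D.
Proof.
have xH : x \in H := mem_gen_set21 x (a * x).
have aH : a \in H by rewrite -(groupMr _ xH) mem_gen_set22.
apply/eqP; rewrite eqEsubset gen_subG; apply/andP; split; last first.
  by rewrite -mul_ax mul_subG ?cycle_subG.
by apply/subsetP => g; rewrite !inE => /orP [] /eqP ->; rewrite ?groupM ?x_in_D ?a_in_D.
Qed.

Lemma v_in_gen (S : {group gT}) i : a \in S -> z \in S -> (i < n)%N -> v i \in S.
Proof. by move=> aS zS lt_in; rewrite -(modn_small lt_in) -conj_z_expa groupJ ?groupX. Qed.

Lemma N_sub_gen (S : {group gT}) : a \in S -> z \in S -> N \subset S.
Proof.
move=> aS zS; rewrite gen_subG; apply/subsetP => _ /imsetP [i _ ->].
exact: v_in_gen (ltn_ord i).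
Qed.

Lemma A_gen : A = <<[set x; a * x; z]>>.
Proof.
set G := <<_>>; have xG : x \in G by rewrite mem_gen // !inE eqxx.
have zG : z \in G by rewrite mem_gen // !inE eqxx !orbT.
have aG : a \in G by rewrite -(groupMr _ xG) mem_gen // !inE eqxx orbT.
apply/eqP; change (A :==: G).
rewrite eqEsubset -{1}mulND -mul_ax !mul_subG ?cycle_subG ?N_sub_gen //=.
rewrite gen_subG; apply/subsetP => g; rewrite !inE => /orP [/orP [] | ] /eqP ->.
- exact: (subsetP D_sub_A _ x_in_D).
- by rewrite groupM ?(subsetP D_sub_A) ?a_in_D ?x_in_D.
exact: (subsetP N_sub_A _ z_in_N).
Qed.

Lemma norm_a_N : <[a]> \subset 'N(N).
Proof. by rewrite cycle_subG (subsetP norm_DN) ?a_in_D. Qed.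

Lemma ti_aN : <[a]> :&: N = 1.
Proof. by apply/trivgP; rewrite -tiND setIC setSI ?cycle_subG ?a_in_D. Qed.

Lemma X_eq : X = N * <[a]>.
Proof.
rewrite -norm_joinEr ?norm_a_N //; apply/eqP; rewrite eqEsubset; apply/andP; split.
  rewrite gen_subG; apply/subsetP => g; rewrite !inE => /orP [] /eqP ->.
    by rewrite (subsetP (joing_subr _ _)) ?cycle_id.
  by rewrite (subsetP (joing_subl _ _)) ?z_in_N.
by rewrite join_subG N_sub_gen ?cycle_subG ?mem_gen_set21 ?mem_gen_set22.
Qed.

Lemma X_sub_A : X \subset A.
Proof. by rewrite X_eq mul_subG ?N_sub_A // cycle_subG (subsetP D_sub_A) ?a_in_D. Qed.

Lemma X_meet_D : X :&: D = <[a]>.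
Proof.
by rewrite X_eq setIC -group_modr ?cycle_subG ?a_in_D // setIC tiND mul1g.
Qed.

(* [x] normalises [X = N <a>], hence [A = N <a> <x> = <x> X]. *)
Lemma A_eq_xX : A :=: <[x]> * X.
Proof.
have nXx : <[x]> \subset 'N(X).
  rewrite X_eq normsM // ?(subset_trans _ norm_DN) ?cycle_subG ?x_in_D //.
  by rewrite inE -cycleJ conj_ax cycleV.
by rewrite (normC nXx) X_eq -mulgA mul_ax mulND.
Qed.

Lemma ti_x (K : {group gT}) : K :&: D = <[a]> -> <[x]> :&: K = 1.
Proof.
have sxD : <[x]> \subset D by rewrite cycle_subG x_in_D.
by move=> KD; apply/trivgP; rewrite -ti_ax -KD -setIA (setIidPr sxD) setIC.
Qed.

Lemma J_eq (c : gT) : c \in [set z; z * x] -> J = <[c]> * <[x]>.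
Proof.
have cxz : commute x z by apply: commute_sym; rewrite /commute conjgC conj_z_x.
rewrite !inE => /orP [] /eqP ->; first exact/gen_set2_mulg/commute_sym.
rewrite -gen_set2_mulg; last exact/commute_sym/commuteM.
apply/eqP; rewrite eqEsubset !gen_subG !subUset !sub1set !mem_gen_set21.
rewrite groupM ?mem_gen_set21 ?mem_gen_set22 //=.
by rewrite -[X in X \in _](mulgK x z) groupM ?groupV ?mem_gen_set21 ?mem_gen_set22.
Qed.

Lemma cos_iso_A (K : {group gT}) (c : gT) :
  K \subset A -> A \subset D * K -> A \subset J * K ->
  c \in [set z; z * x] -> c \in K -> K :&: D = <[a]> ->
  cos_iso K <[a]> <[c]> A H J.
Proof.
move=> sKA sADK sAJK cz cK KD.
have KJ : K :&: J = <[c]>.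
  by rewrite (J_eq cz) setIC -group_modl ?cycle_subG // ti_x // mulg1.
rewrite -KD -KJ H_eq_D; apply: cos_iso_subgroup => //.
apply: (setI_mulg_sub (M := <[c]>%G)); last by rewrite KJ.
by rewrite /= (J_eq cz) mulgS // cycle_subG x_in_D.
Qed.

Lemma x_in_J : x \in J. Proof. exact: mem_gen_set21. Qed.

Lemma cos_iso_X : cos_iso X <[a]> <[z]> A H J.
Proof.
have xXD (K : {group gT}) : x \in K -> A \subset K * X.
  by move=> xK; rewrite A_eq_xX mulSg // cycle_subG.
apply: cos_iso_A; rewrite ?X_sub_A ?xXD ?x_in_D ?x_in_J ?set21 ?X_meet_D //.
exact: mem_gen_set22.
Qed.

Lemma x_notin_a : x \notin <[a]>.
Proof.
apply/negP => xa; have : x \in <[a]> :&: <[x]> by rewrite inE xa cycle_id.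
by rewrite ti_ax => /set1gP x1; move: order_x; rewrite x1 order1.
Qed.

Lemma mulx_in_a d : d \in D -> (d * x \in <[a]>) = (d \notin <[a]>).
Proof.
move=> dD; have [da | nda] := boolP (d \in <[a]>).
  by rewrite groupMl // (negbTE x_notin_a).
have [da | [c ca ->]] := D_cases dD; first by rewrite da in nda.
by rewrite -mulgA -expg2 -order_x expg_order mulg1.
Qed.

Definition parity_class : {set gT} :=
  [set g | [exists p in N, exists d in D, (g == p * d) && (parity p == (d \notin <[a]>))]].

Lemma Y_sub_parity_class : Y \subset parity_class.
Proof.
apply: gen_subset_mulr_closed => [|g b]; rewrite !inE.
  apply/exists_inP; exists 1; first exact: group1.
  by apply/exists_inP; exists 1; [exact: group1 | rewrite mulg1 parity1 (group1 <[a]>) eqxx].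
case/exists_inP => p pN /exists_inP [d dD /andP [/eqP -> /eqP par_p]] /orP [] /eqP ->.
  apply/exists_inP; exists p => //; apply/exists_inP; exists (d * a).
    by rewrite groupM ?a_in_D.
  by rewrite mulgA eqxx groupMr ?cycle_id // par_p; apply/eqP.
have [m zd] := conj_z_D (groupVr dD).
have dz : d * z = v (m %% n) * d by rewrite conjgCV zd.
apply/exists_inP; exists (v (m %% n) * p); first by rewrite groupM ?v_in_N ?ltn_pmod ?n_gt0.
apply/exists_inP; exists (d * x); first by rewrite groupM ?x_in_D.
rewrite mulgA -(mulgA p) dz mulgA (commute_N pN) ?v_in_N ?ltn_pmod ?n_gt0 // -!mulgA eqxx /=.
by rewrite (parity_vmul (Ordinal (ltn_pmod m n_gt0))) // mulx_in_a // par_p.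
Qed.

Lemma Y_meet_D : Y :&: D = <[a]>.
Proof.
apply/eqP; rewrite eqEsubset subsetI !cycle_subG a_in_D mem_gen_set21 !andbT.
apply/subsetP => g /setIP [/(subsetP Y_sub_parity_class)].
rewrite inE => /exists_inP [p pN /exists_inP [d dD /andP [/eqP -> /eqP par_p]]] pdD.
have p1 : p = 1.
  by apply/set1gP; rewrite -tiND inE pN -(groupMr _ dD).
by move: par_p; rewrite p1 parity1 mul1g => /esym /negbFE.
Qed.

Lemma Y_sub_A : Y \subset A.
Proof.
rewrite gen_subG; apply/subsetP => g; rewrite !inE => /orP [] /eqP ->.
  exact: (subsetP D_sub_A _ a_in_D).
by rewrite groupM ?(subsetP D_sub_A _ x_in_D) ?(subsetP N_sub_A _ z_in_N).
Qed.

Lemma conj_Y_x w : w \in Y -> w ^ x \in Y.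
Proof.
have : Y \subset [set w | w ^ x \in Y].
  apply: gen_subset_mulr_closed => [|g b]; rewrite !inE ?conj1g ?group1 // => gY.
  case/orP => /eqP ->; rewrite conjMg groupM //; first by rewrite conj_ax groupV mem_gen_set21.
  by rewrite conjMg conj_z_x [x ^ x]/conjg mulKg mem_gen_set22.
by move/subsetP => sY /sY; rewrite inE.
Qed.

Lemma A_sub_KY (K : {group gT}) : x \in K -> A \subset K * Y.
Proof.
move=> xK.
have mulx k w : k \in K -> w \in Y -> k * w * x \in K * Y.
  move=> kK wY; rewrite -mulgA (conjgC w x) mulgA.
  by apply: mem_mulg; [exact: groupM | exact: conj_Y_x].
rewrite A_gen; apply: gen_subset_mulr_closed => [|_ g /mulsgP [k w kK wY ->]].
  by rewrite -(mulg1 1) mem_mulg.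
rewrite !inE => /orP [/orP [] | ] /eqP ->.
- exact: mulx.
- by rewrite mulgA -(mulgA k w a); apply: mulx; rewrite ?groupM ?mem_gen_set21.
have -> : k * w * z = k * (w * (z * x)) * x by rewrite -!mulgA -expg2 -order_x expg_order mulg1.
by apply: mulx => //; rewrite groupM ?mem_gen_set22.
Qed.

Lemma cos_iso_Y : cos_iso Y <[a]> <[z * x]> A H J.
Proof.
apply: cos_iso_A; rewrite ?Y_sub_A ?A_sub_KY ?x_in_D ?x_in_J ?set22 ?Y_meet_D //.
exact: mem_gen_set22.
Qed.

Definition vert_coset (u : cube_vert n) : {set gT} := <[a]> :* vprod u.

(* The edge [{u, u + e_i}] with copy index [k] becomes the coset [<z> a^(i + n k) u];
   the value does not depend on the chosen endpoint (see [edge_coset_at]). *)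
Definition edge_coset (e : {set cube_vert n} * 'I_lam) : {set gT} :=
  if [pick uw | cube_adj uw.1 uw.2 && (e.1 == [set uw.1; uw.2])] is Some (u, w)
  then <[z]> :* (a ^+ (flip_index u w + n * e.2) * vprod u) else set0.

Lemma modn_ord_add (i : 'I_n) k : ((i + n * k) %% n = i)%N.
Proof. by rewrite addnC mulnC modnMDl modn_small. Qed.

Lemma divn_ord_add (i : 'I_n) k : ((i + n * k) %/ n = k)%N.
Proof. by rewrite addnC mulnC divnMDl ?n_gt0 // divn_small // addn0. Qed.

Lemma zcoset_expa_v (i : 'I_n) k g :
  <[z]> :* (a ^+ (i + n * k) * v i * g) = <[z]> :* (a ^+ (i + n * k) * g).
Proof.
have -> : a ^+ (i + n * k) * v i = z * a ^+ (i + n * k).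
  by rewrite (conjgC z) conj_z_expa modn_ord_add.
by rewrite -mulgA; apply/rcoset_eqP; rewrite mem_rcoset mulgK cycle_id.
Qed.

Lemma edge_coset_at e t : e \in cube_edges n lam -> t \in e.1 ->
  exists i : 'I_n, e.1 = [set t; cube_flip i t] /\
                   edge_coset e = <[z]> :* (a ^+ (i + n * e.2) * vprod t).
Proof.
move=> eE te; have [u [j def_e]] := cube_edgeP eE.
rewrite /edge_coset; case: pickP => [[u' w'] /= /andP [/cube_adjP [i [-> ->]] /eqP e1] | ].
  move: te; rewrite e1 !inE => /orP [] /eqP ->; first by exists i.
  by exists i; rewrite cube_flipK setUC vprod_flip mulgA zcoset_expa_v.
by move/(_ (u, cube_flip j u)); rewrite /= cube_adj_flip def_e eqxx.
Qed.

Lemma expa_mul_in_za q m : q \in N ->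
  (a ^+ m * q \in <[z]> * <[a]>) = (q == 1) || (q == v (m %% n)).
Proof.
move=> qN; set r := q ^ (a ^+ m)^-1.
have rN : r \in N by rewrite memJ_norm ?groupV ?groupX // (subsetP norm_DN) ?a_in_D.
have zaN : <[z]> * <[a]> :&: N = <[z]>.
  by rewrite -group_modl ?cycle_subG ?z_in_N // ti_aN mulg1.
rewrite conjgCV -/r -(mul1g r) mem_mul_double_coset ?mem_cycle //.
rewrite -[r \in _]andbT -rN -in_setI zaN (cycle2g order_z) !inE.
by rewrite /r conjg_eq1 -conj_z_expa (can2_eq (conjgKV _) (conjgK _)).
Qed.

Lemma cos_inc_cube e t : e \in cube_edges n lam ->
  cos_inc <[a]> <[z]> (vert_coset t) (edge_coset e) = (t \in e.1).
Proof.
move=> eE; have [u [j def_e]] := cube_edgeP eE.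
have ue : u \in e.1 by rewrite def_e set21.
have [i [-> ->]] := edge_coset_at eE ue.
rewrite cos_incE -mulgA expa_mul_in_za ?groupM ?groupV ?vprod_in_N // modn_ord_add !inE.
congr (_ || _); first by rewrite -eq_mulgV1 (inj_eq vprod_inj) eq_sym.
rewrite invg_N ?vprod_in_N // (can2_eq (mulKg _) (mulKVg _)) invg_N ?vprod_in_N //.
by rewrite (commute_N (vprod_in_N u) (v_in_N (ltn_ord i))) -vprod_flip (inj_eq vprod_inj).
Qed.

Lemma vert_coset_inj : injective vert_coset.
Proof.
move=> u w /rcoset_eqP; rewrite mem_rcoset => uw_a; apply/vprod_inj/eqP.
by rewrite eq_mulgV1; apply/eqP/set1gP; rewrite -ti_aN inE uw_a groupM ?groupV ?vprod_in_N.
Qed.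

Lemma vert_coset_onto : vert_coset @: [set: cube_vert n] = rcosets <[a]> X.
Proof.
apply/setP => C; apply/imsetP/rcosetsP => [[u _ ->] | [g]].
  exists (vprod u) => //.
  by rewrite (subsetP (N_sub_gen _ _)) ?vprod_in_N ?mem_gen_set21 ?mem_gen_set22.
rewrite X_eq -(normC norm_a_N) => /mulsgP [c p ca /vprod_onto [u <-] ->] ->.
by exists u; rewrite // /vert_coset; apply/rcoset_eqP; rewrite mem_rcoset mulgK.
Qed.

Lemma ord_add_lt (i : 'I_n) (k : 'I_lam) : (i + n * k < n * lam)%N.
Proof. by have := ltn_ord i; have := ltn_ord k; nia. Qed.

Lemma edge_coset_inj : {in cube_edges n lam &, injective edge_coset}.
Proof.
move=> e1 e2 E1 E2 e12.
have s12 : e1.1 = e2.1 by apply/setP => t; rewrite -!cos_inc_cube // e12.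
have [u [j def_e1]] := cube_edgeP E1.
have ue1 : u \in e1.1 by rewrite def_e1 set21.
have [i1 [_ f1]] := edge_coset_at E1 ue1.
have ue2 : u \in e2.1 by rewrite -s12.
have [i2 [_ f2]] := edge_coset_at E2 ue2.
move: e12; rewrite f1 f2 => /rcoset_eqP; rewrite mem_rcoset invMg mulgA mulgK => a12z.
have /eqP : a ^+ (i1 + n * e1.2) == a ^+ (i2 + n * e2.2).
  rewrite eq_mulgV1; apply/eqP/set1gP; rewrite -ti_aN inE groupM ?groupV ?mem_cycle //=.
  by apply: (subsetP _ _ a12z); rewrite cycle_subG z_in_N.
move/eqP; rewrite eq_expg_mod_order !modn_small ?order_a ?ord_add_lt // => /eqP m12.
have k12 : e1.2 = e2.2 by apply: ord_inj; rewrite -(divn_ord_add i1 e1.2) m12 divn_ord_add.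
move: s12 k12; case: e1 {E1 f1 def_e1 ue1 m12 a12z} => S1 k1.
by case: e2 {E2 f2 ue2} => S2 k2 /= -> ->.
Qed.

Lemma edge_coset_onto : edge_coset @: cube_edges n lam = rcosets <[z]> X.
Proof.
have sX : X = <[a]> * N by rewrite X_eq (normC norm_a_N).
apply/setP => C; apply/imsetP/rcosetsP => [[e eE ->] | [g]].
  have [u [j def_e]] := cube_edgeP eE.
  have ue : u \in e.1 by rewrite def_e set21.
  have [i [_ ->]] := edge_coset_at eE ue.
  by exists (a ^+ (i + n * e.2) * vprod u); rewrite // sX mem_mulg ?mem_cycle ?vprod_in_N.
rewrite sX => /mulsgP [c p /cycleP [m0 ->] /vprod_onto [u <-] ->] ->.
pose m := (m0 %% (n * lam))%N.
have lt_k : (m %/ n < lam)%N.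
  by rewrite ltn_divLR ?n_gt0 // mulnC ltn_pmod // -order_a order_gt0.
pose i := Ordinal (ltn_pmod m n_gt0); pose k := Ordinal lt_k.
exists ([set u; cube_flip i u], k); first exact: cube_edge_in.
have [i' [e1 ->]] := edge_coset_at (cube_edge_in u i k) (set21 u _).
have -> : i' = i.
  have : cube_flip i u \in [set u; cube_flip i' u] by rewrite -e1 set22.
  by rewrite !inE (negbTE (cube_flip_neq _ _)) => /eqP /cube_flip_inj.
have -> : (i + n * k = m)%N by rewrite /= [in RHS](divn_eq m n) addnC mulnC.
by rewrite /m -order_a expg_mod_order.
Qed.

Lemma cube_cos_iso_X : mgraph_iso [set: cube_vert n] (cube_edges n lam) (@cube_inc n lam)
  (rcosets <[a]> X) (rcosets <[z]> X) (@cos_inc gT <[a]> <[z]>).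
Proof.
exists vert_coset, edge_coset; split.
- by move=> u w _ _; apply: vert_coset_inj.
- exact: vert_coset_onto.
- exact: edge_coset_inj.
- exact: edge_coset_onto.
by move=> u _ e eE; apply: cos_inc_cube.
Qed.

Lemma flag_regular_A : flag_regular A x (a * x) z.
Proof.
have z_notin_D : z \notin D.
  by apply/negP => zD; move/eqP: z_neq1; apply; apply/set1gP; rewrite -tiND inE z_in_N.
have a_neq1 : a != 1.
  apply: contraTneq n_ge3 => a1; move: order_a; rewrite a1 order1 => /esym/eqP.
  by rewrite muln_eq1 => /andP [/eqP -> _].
have xax : x * a * x = a^-1 by rewrite -conj_ax conjgE (invg2id order_x) mulgA.
split.
- split=> //; last exact: order_z.
  apply: nt_prime_order => //; first by rewrite expg2 -mulgA (mulgA x) xax mulgV.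
  apply: contraNneq x_notin_a => ax1.
  by rewrite -(mulKg a x) ax1 mulg1 groupV cycle_id.
- split.
  + by apply: contra_neq a_neq1 => x_ax; apply: (mulIg x); rewrite mul1g -x_ax.
  + by apply: contraNneq z_notin_D => <-; rewrite groupM ?a_in_D ?x_in_D.
  + by apply: contraNneq z_notin_D => <-; exact: x_in_D.
- by rewrite {1}A_gen.
- by apply: commute_sym; rewrite /commute conjgC conj_z_x.
by rewrite H_eq_D.
Qed.

End CubeGroup.

Theorem lemma6p2 (gT : finGroupType) (n lam : nat) (v : nat -> gT)
    (a x : gT) (D A : {group gT}) :
  (3 <= n)%N -> (1 <= lam)%N ->
  2.-abelem (Nsub n v) -> #|Nsub n v| = (2 ^ n)%N ->
  #[a] = (n * lam)%N -> #[x] = 2%N -> a ^ x = a^-1 ->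
  <[a]> ><| <[x]> = D ->
  Nsub n v ><| D = A ->
  (forall i, (i < n)%N -> v i ^ a = v ((i + 1) %% n)) ->
  (forall i, (i < n)%N -> v i ^ x = v ((n - i) %% n)) ->
  let z := v 0%N in
  let y := a * x in
  let H := <<[set x; y]>> in
  let J := <<[set x; z]>> in
  let X := <<[set a; z]>> in
  let Y := <<[set a; z * x]>> in
  [/\ flag_regular A x y z,
      cube_cos_iso n lam A H J,
      cos_iso A H J X <[a]> <[z]>,
      cos_iso X <[a]> <[z]> Y <[a]> <[z * x]> &
      val_mult (rcosets H A) (rcosets J A) (@cos_inc gT H J) n lam].
Proof.
move=> n_ge3 lam_gt0 abelN cardN order_a order_x conj_ax sdD sdA conj_va conj_vx z y H J X Y.
have cosX : cos_iso X <[a]> <[z]> A H J by apply: (cos_iso_X (n := n) (D := D)).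
have cosY : cos_iso Y <[a]> <[z * x]> A H J by apply: (cos_iso_Y (n := n) (D := D)).
have cubeA : cube_cos_iso n lam A H J.
  by apply: mgraph_iso_trans _ cosX; apply: (cube_cos_iso_X (x := x) (D := D) (A := A)).
split.
- by apply: (flag_regular_A (n := n) (lam := lam) (D := D)).
- exact: cubeA.
- exact: mgraph_iso_sym set0 set0 cosX.
- exact: mgraph_iso_trans cosX (mgraph_iso_sym set0 set0 cosY).
exact: val_mult_iso cubeA (cube_val_mult n lam_gt0).
Qed.
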